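(* Let $S$ be a locally compact semitopological semigroup. Then $S$ has an identity element if and only if the Banach algebra $M(S)$ has an identity element of norm one.
   Context: A semitopological semigroup is a semigroup with a Hausdorff topology in which multiplication is separately continuous. For locally compact $S$, $M(S)\cong \mathcal{C}_0(S)^\ast$ is the space of complex regular Borel measures on $S$ with total variation norm, made into a Banach algebra by the convolution $\langle f,\mu\ast\nu\rangle=\int_S\int_S f(st)\,d\mu(s)\,d\nu(t)$ for $f\in\mathcal{C}_0(S)$ (the iterated integral exists and is independent of the order of integration). *)

From HB Require Import structures.
From mathcomp Require Import all_boot all_order all_algebra.
From mathcomp Require Import all_classical all_reals all_analysis.
From mathcomp Require Import complex.

Set Implicit Arguments.
Unset Strict Implicit.
Unset Printing Implicit Defensive.
Import Order.TTheory GRing.Theory Num.Theory.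
Import numFieldNormedType.Exports.
Local Open Scope classical_set_scope.
Local Open Scope ring_scope.

Definition semitopological_semigroup (S : topologicalType) (mul : S -> S -> S) :=
  [/\ hausdorff_space S,
      associative mul,
      (forall a : S, continuous (mul a)) &
      (forall a : S, continuous (fun x => mul x a))].

Definition has_identity (S : Type) (mul : S -> S -> S) :=
  exists e : S, forall x : S, mul e x = x /\ mul x e = x.

Definition Borel (S : ptopologicalType) := g_sigma_algebraType (@open S).

Record cmeasure (S : ptopologicalType) (R : realType) := CMeasure {
  cm_re : {charge set (Borel S) -> \bar R};
  cm_im : {charge set (Borel S) -> \bar R} }.

Section complex_measures.
Context (S : ptopologicalType) (R : realType).
Local Notation BS := (Borel S).

Definition cabs (z : R[i]) : R :=
  Num.sqrt (complex.Re z ^+ 2 + complex.Im z ^+ 2).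

Definition cmval (mu : cmeasure S R) (E : set BS) : R[i] :=
  Complex (fine (cm_re mu E)) (fine (cm_im mu E)).

Definition cvariation (mu : cmeasure S R) (E : set BS) : \bar R :=
  ereal_sup [set x : \bar R | exists (n : nat) (F : 'I_n -> set BS),
    [/\ (forall i, measurable (F i)),
        (forall i j, i != j -> F i `&` F j = set0),
        \big[setU/set0]_(i < n) F i = E &
        x = (\sum_(i < n) cabs (cmval mu (F i)))%:E]].

Definition cmnorm (mu : cmeasure S R) : \bar R := cvariation mu setT.

Definition cm_regular (mu : cmeasure S R) :=
  forall E : set BS, measurable E ->
    cvariation mu E = ereal_inf [set cvariation mu U |
                                 U in [set U : set S | open U /\ E `<=` U]] /\
    cvariation mu E = ereal_sup [set cvariation mu K |
                                 K in [set K : set S | compact K /\ K `<=` E]].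

Definition cm_eq (mu nu : cmeasure S R) :=
  forall E : set BS, measurable E ->
    cm_re mu E = cm_re nu E /\ cm_im mu E = cm_im nu E.

Definition hahn_choice (nu : {charge set BS -> \bar R}) :
  {PN : set BS * set BS | hahn_decomposition nu PN.1 PN.2}.
Proof.
apply: cid.
have [P [N h]] := Hahn_decomposition nu.
by exists (P, N).
Defined.

Definition charge_int (nu : {charge set BS -> \bar R}) (u : BS -> R) : R :=
  let h := proj2_sig (hahn_choice nu) in
  (\int[jordan_pos h]_x u x - \int[jordan_neg h]_x u x)%R.

Definition cm_int (mu : cmeasure S R) (f : S -> R[i]) : R[i] :=
  let u := fun x => complex.Re (f x) in
  let v := fun x => complex.Im (f x) in
  Complex (charge_int (cm_re mu) u - charge_int (cm_im mu) v)
          (charge_int (cm_re mu) v + charge_int (cm_im mu) u).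

End complex_measures.

Definition C0 (S : ptopologicalType) (R : realType) (f : S -> R[i]) :=
  continuous (fun x => complex.Re (f x)) /\
  continuous (fun x => complex.Im (f x)) /\
  (forall e : R, 0 < e -> exists K : set S,
     compact K /\ forall x, ~ K x -> cabs (f x) < e).

Definition is_convolution (S : ptopologicalType) (R : realType)
  (mul : S -> S -> S) (mu nu lam : cmeasure S R) :=
  forall f : S -> R[i], C0 f ->
    cm_int lam f = cm_int nu (fun t => cm_int mu (fun s => f (mul s t))).

Definition MS_has_norm_one_identity (S : ptopologicalType) (R : realType)
  (mul : S -> S -> S) :=
  exists mu : cmeasure S R,
    cm_regular mu /\ cmnorm mu = 1%E /\
    forall nu : cmeasure S R, cm_regular nu ->
      is_convolution mul mu nu nu /\ is_convolution mul nu mu nu.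

(* If [e] is an identity of [S], the point mass at [e] is a norm-one identity
   of M(S).  Conversely, let [mu] be a norm-one identity and [lam] the positive
   Jordan part of [Re mu].  Convolving [mu] with point masses gives
   [int phi(s x) d(Re mu)(s) = phi x = int phi(x s) d(Re mu)(s)] for continuous
   compactly supported [phi]; together with [||mu|| = 1] this forces
   [lam S = 1] and makes [lam] vanish near every [s] with [s x <> x] or
   [x s <> x] for some [x] (test against a bump at [x] that vanishes near
   [s x], resp. [x s]).  Without an identity [lam] would thus vanish on every
   compact set, whereas inner regularity of [|mu|] on the positive Hahn set
   produces a compact set of positive [lam]-measure. *)

From HB Require Import structures.
From mathcomp Require Import all_boot all_order all_algebra.
From mathcomp Require Import all_classical all_reals all_analysis.
From mathcomp Require Import complex finmap.
From mathcomp Require Import measurable_realfun lra.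
Import Order.TTheory GRing.Theory Num.Theory.
Import numFieldNormedType.Exports.
Local Open Scope classical_set_scope.
Local Open Scope ring_scope.

Set Implicit Arguments.
Unset Strict Implicit.
Unset Printing Implicit Defensive.

Section dirac_like.
Context {d} {T : measurableType d} {R : realType} (a : T).
Hypothesis measurable_a : measurable [set a].
Context (m : {measure set T -> \bar R}).
Hypothesis m_dirac : forall A, measurable A -> m A = \d_a A.
Import HBNNSimple.
Local Open Scope ereal_scope.

Lemma sintegral_dirac_like (h : {nnsfun T >-> R}) : sintegral m h = (h a)%:E.
Proof.
rewrite -integralT_nnsfun (eq_measure_integral (\d_a : {measure set T -> \bar R})).
  rewrite integral_dirac//; last exact/measurable_EFinP.
  by rewrite /dirac /= indicE mem_set// mul1e.
by move=> A mA _; exact: m_dirac.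
Qed.

Lemma ge0_integral_dirac_like (f : T -> \bar R) (r : R) :
  (forall x, 0 <= f x) -> f a = r%:E -> \int[m]_x f x = r%:E.
Proof.
move=> f0 far; rewrite ge0_integralTE//; apply/eqP; rewrite eq_le; apply/andP; split.
  apply: ub_ereal_sup => _ [h hf <-]; rewrite sintegral_dirac_like -far; exact: hf.
have r0 : (0 <= r)%R by rewrite -lee_fin -far.
apply: ereal_sup_ubound; exists (scale_nnsfun (indic_nnsfun R measurable_a) r0).
  move=> x /=; rewrite /mindic indicE; have [->|xa] := eqVneq x a.
    by rewrite mem_set// mulr1 far.
  by rewrite memNset ?mulr0//; exact/eqP.
by rewrite sintegral_dirac_like /= /mindic indicE mem_set// mulr1.
Qed.

(* [g] need not be measurable: [m] is concentrated on the measurable singleton [[set a]]. *)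
Lemma integral_dirac_like (g : T -> R) : \int[m]_x (g x)%:E = (g a)%:E.
Proof.
rewrite integralE (@ge0_integral_dirac_like _ (Num.max (g a) 0%R))//; last first.
  by rewrite funeposE EFin_max.
rewrite (@ge0_integral_dirac_like _ (Num.max (- g a)%R 0%R))//; last first.
  by rewrite funenegE EFin_max.
rewrite -EFinB; congr EFin.
have [g0|g0] := leP 0%R (g a).
  by rewrite (max_idPr _) ?subr0// oppr_le0.
by rewrite (max_idPl _) ?sub0r ?opprK// oppr_ge0 ltW.
Qed.

End dirac_like.

Section measure_lemmas.
Context {d} {T : measurableType d} {R : realType}.
Local Open Scope ereal_scope.

Lemma integral_null_measure (m : {measure set T -> \bar R}) (f : T -> \bar R) :
  (forall A, measurable A -> m A = 0) -> \int[m]_x f x = 0.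
Proof.
move=> m0; rewrite (eq_measure_integral (@mzero _ T R)) ?integral_measure_zero//.
by move=> A mA _; rewrite m0.
Qed.

Lemma ge1_of_integral_difference (m1 m2 : {measure set T -> \bar R}) (g : T -> R) :
  (forall x, 0 <= g x)%R ->
  (fine (\int[m1]_x (g x)%:E) - fine (\int[m2]_x (g x)%:E))%R = 1%R ->
  1 <= \int[m1]_x (g x)%:E.
Proof.
move=> g0 eq1.
have I2 : (0 <= fine (\int[m2]_x (g x)%:E))%R.
  by apply/fine_ge0/integral_ge0 => x _; rewrite lee_fin.
move: eq1; case: (\int[m1]_x (g x)%:E) => [r| |] /= eq1.
- by rewrite lee_fin; lra.
- by rewrite leey.
- exfalso; lra.
Qed.

Section unit_interval.
Variables (m : {measure set T -> \bar R}) (g : T -> R).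
Hypotheses (mg : measurable_fun setT g) (g01 : forall x, (0 <= g x <= 1)%R).

Let g0 x : 0 <= (g x)%:E. Proof. by rewrite lee_fin; case/andP: (g01 x). Qed.
Let mgE : measurable_fun setT (fun x => (g x)%:E). Proof. exact/measurable_EFinP. Qed.

Lemma integral_le_measureT : \int[m]_x (g x)%:E <= m setT.
Proof.
rewrite -[X in _ <= X]mul1e -integral_cst//; apply: ge0_le_integral => //.
by move=> x _; rewrite lee_fin; case/andP: (g01 x).
Qed.

Lemma measure_add_integral_le_measureT (U : set T) : measurable U ->
  (forall x, U x -> g x = 0%R) -> m U + \int[m]_x (g x)%:E <= m setT.
Proof.
move=> mU gU; have -> : m U = \int[m]_x (\1_U x)%:E by rewrite integral_indic// setIT.
rewrite -ge0_integralD//; last by apply/measurable_EFinP; exact: measurable_indic.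
rewrite -[X in _ <= X]mul1e -integral_cst//; apply: ge0_le_integral => //.
- by move=> x _; rewrite adde_ge0// lee_fin.
- by apply: emeasurable_funD => //; apply/measurable_EFinP; exact: measurable_indic.
move=> x _; rewrite indicE; have [/set_mem Ux|_] := boolP (x \in U).
  by rewrite gU// adde0.
by rewrite add0e lee_fin; case/andP: (g01 x).
Qed.

Lemma measure_eq0_of_integral_ge1 (U : set T) : measurable U ->
  (forall x, U x -> g x = 0%R) -> m setT <= 1 -> 1 <= \int[m]_x (g x)%:E -> m U = 0.
Proof.
move=> mU gU mT1 I1.
have le1 := le_trans (measure_add_integral_le_measureT mU gU) mT1.
have U0 : 0 <= m U by [].
have I0 : 0 <= \int[m]_x (g x)%:E by apply: integral_ge0.
have Ufin : m U \is a fin_num.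
  by rewrite ge0_fin_numE// (le_lt_trans _ (ltey 1))// (le_trans _ le1)// leeDl.
have Ifin : \int[m]_x (g x)%:E \is a fin_num.
  by rewrite ge0_fin_numE// (le_lt_trans _ (ltey 1))// (le_trans _ le1)// leeDr.
move: le1 I1 U0; rewrite -(fineK Ufin) -(fineK Ifin) -EFinD !lee_fin => le1 I1 U0.
by congr EFin; lra.
Qed.
End unit_interval.
End measure_lemmas.

Section Borel_sets.
Context {S : ptopologicalType}.
Local Notation BS := (Borel S).

Lemma open_Borel (U : set S) : open U -> measurable (U : set BS).
Proof. by move=> oU; exact: sub_gen_smallest. Qed.

Lemma closed_Borel (U : set S) : closed U -> measurable (U : set BS).
Proof.
by move=> cU; rewrite -(setCK U); apply: measurableC; apply: open_Borel; exact: closed_openC.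
Qed.

Hypothesis hS : hausdorff_space S.

Lemma closed_set1 (a : S) : closed [set a].
Proof. by apply: accessible_closed_set1; exact: hausdorff_accessible. Qed.

Lemma set1_Borel (a : S) : measurable ([set a] : set BS).
Proof. by apply: closed_Borel; exact: closed_set1. Qed.

Lemma compact_Borel (K : set S) : compact K -> measurable (K : set BS).
Proof. by move=> cK; apply: closed_Borel; exact: compact_closed. Qed.

Lemma continuous_Borel_measurable {R : realType} (f : S -> R) :
  continuous f -> measurable_fun setT (f : BS -> R).
Proof.
move=> /continuousP cf; apply: (measurability _ (RGenOpens.measurableE R)).
move=> _ [_ [a [b ->] <-]]; apply: measurableI => //; apply: open_Borel.
exact/cf/interval_open.
Qed.

End Borel_sets.

Section complex_measures.
Context {S : ptopologicalType} {R : realType}.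
Local Notation BS := (Borel S).

Lemma cabs_real (x : R) : cabs (Complex x 0) = `|x|.
Proof. by rewrite /cabs /= expr0n /= addr0 sqrtr_sqr. Qed.

Lemma cabs_ge0 (z : R[i]) : 0 <= cabs z.
Proof. exact: sqrtr_ge0. Qed.

Lemma Re_le_cabs (z : R[i]) : `|complex.Re z| <= cabs z.
Proof. by rewrite /cabs -sqrtr_sqr; apply: ler_wsqrtr; rewrite lerDl sqr_ge0. Qed.

Lemma cm_re_le_cabs (mu : cmeasure S R) (A : set BS) : measurable A ->
  (cm_re mu A <= (cabs (cmval mu A))%:E)%E.
Proof.
move=> mA; rewrite -(fineK (fin_num_measure (cm_re mu) _ mA)) lee_fin.
by apply: le_trans (Re_le_cabs _); exact: ler_norm.
Qed.

Definition is_partition {n} (F : 'I_n -> set BS) (E : set BS) :=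
  [/\ (forall i, measurable (F i)), (forall i j, i != j -> F i `&` F j = set0) &
      \big[setU/set0]_(i < n) F i = E].

Lemma is_partition1 (E : set BS) : measurable E -> is_partition (fun _ : 'I_1 => E) E.
Proof.
move=> mE; split => //; first by move=> i j; rewrite (ord1 i) (ord1 j) eqxx.
by rewrite big_ord1.
Qed.

Definition add_block {n} (F : 'I_n -> set BS) (A : set BS) : 'I_n.+1 -> set BS :=
  fun i => if unlift ord_max i is Some j then F j else A.

Lemma add_block_widen {n} (F : 'I_n -> set BS) A (i : 'I_n) :
  add_block F A (widen_ord (leqnSn n) i) = F i.
Proof.
have -> : widen_ord (leqnSn n) i = lift ord_max i.
  by apply: val_inj; rewrite /= /bump leqNgt ltn_ord.
by rewrite /add_block liftK.
Qed.

Lemma add_block_max {n} (F : 'I_n -> set BS) A : add_block F A ord_max = A.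
Proof. by rewrite /add_block unlift_none. Qed.

Lemma is_partition_add_block {n} (F : 'I_n -> set BS) E A :
  is_partition F E -> measurable A -> E `&` A = set0 ->
  is_partition (add_block F A) (E `|` A).
Proof.
move=> [mF dF UF] mA EA0; have FE j : F j `<=` E.
  by move=> x Fx; rewrite -UF (bigD1 j)//=; left.
split.
- by move=> i; rewrite /add_block; case: unliftP.
- move=> i j; rewrite /add_block.
  case: unliftP => [i' ->|->]; case: unliftP => [j' ->|->] //.
  + by move=> ij; apply: dF; apply: contra ij => /eqP ->.
  + by move=> _; apply/seteqP; split => // x [/FE Ex Ax]; rewrite -EA0.
  + by move=> _; apply/seteqP; split => // x [Ax /FE Ex]; rewrite -EA0.
  + by rewrite eqxx.
- rewrite big_ord_recr /= add_block_max -UF; congr (_ `|` _).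
  by apply: eq_bigr => i _; rewrite add_block_widen.
Qed.

Lemma sum_cabs_add_block (mu : cmeasure S R) {n} (F : 'I_n -> set BS) A :
  \sum_(i < n.+1) cabs (cmval mu (add_block F A i)) =
  \sum_(i < n) cabs (cmval mu (F i)) + cabs (cmval mu A).
Proof.
rewrite big_ord_recr /= add_block_max; congr (_ + _).
by apply: eq_bigr => i _; rewrite add_block_widen.
Qed.

Lemma sum_cabs_le_cvariation (mu : cmeasure S R) {n} (F : 'I_n -> set BS) E :
  is_partition F E -> ((\sum_(i < n) cabs (cmval mu (F i)))%:E <= cvariation mu E)%E.
Proof. by move=> [mF dF UF]; apply: ereal_sup_ubound; exists n, F. Qed.

Lemma charge_int0 (nu : {charge set BS -> \bar R}) : charge_int nu (fun _ => 0) = 0.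
Proof. by rewrite /charge_int /Rintegral !integral0 /= subrr. Qed.

Lemma Re_cm_int (mu : cmeasure S R) (g : S -> R) :
  complex.Re (cm_int mu (fun s => Complex (g s) 0)) = charge_int (cm_re mu) g.
Proof. by rewrite /cm_int /= charge_int0 subr0. Qed.

Definition compactly_supported (phi : S -> R) :=
  exists C, compact C /\ forall y, ~ C y -> phi y = 0.

Lemma C0_compactly_supported (phi : S -> R) : continuous phi ->
  compactly_supported phi -> C0 (fun y => Complex (phi y) 0).
Proof.
move=> cphi [C [cC Cphi]]; split => //; split; first by move=> y; exact: cvg_cst.
move=> e e0; exists C; split => // y Cy.
by rewrite /cabs /= Cphi// expr0n /= addr0 sqrtr0.
Qed.

Lemma charge_int_czero (u : BS -> R) : charge_int (@czero _ BS R) u = 0.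
Proof.
rewrite /charge_int /Rintegral !integral_null_measure ?subr0//.
  move=> A mA; apply: eq_trans (jordan_negE (proj2_sig (hahn_choice _)) A) _.
  by rewrite cjordan_negE /crestr0; case: ifP => _; rewrite ?oppe0.
move=> A mA; apply: eq_trans (jordan_posE (proj2_sig (hahn_choice _)) A) _.
by rewrite cjordan_posE /crestr0; case: ifP.
Qed.

Definition cdirac (a : S) : cmeasure S R :=
  CMeasure (charge_of_finite_measure (@dirac _ BS a R)) czero.

Lemma cvariation_cdirac (a : S) (E : set BS) : measurable E ->
  cvariation (cdirac a) E = ((a \in E)%:R)%:E.
Proof.
have cabs_dirac A : cabs (cmval (cdirac a) A) = (a \in A)%:R.
  by rewrite /cmval /cdirac /= /charge_of_finite_measure /= cabs_real indicE ger0_norm.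
move=> mE; rewrite -(@diracE _ BS R a E); apply/eqP; rewrite eq_le; apply/andP; split.
  apply: ge_ereal_sup => _ [n [F [mF dF UF ->]]].
  rewrite -sumEFin -UF measure_semi_additive_ord//; last 2 first.
  - by apply/trivIsetP => i j _ _ /dF.
  - by rewrite UF.
  by apply: lee_sum => i _; rewrite cabs_dirac /= ?diracE ?indicE.
have := sum_cabs_le_cvariation (cdirac a) (is_partition1 mE).
by rewrite big_ord1 cabs_dirac /= ?diracE ?indicE.
Qed.

Lemma cdirac_norm (a : S) : cmnorm (cdirac a) = 1%E.
Proof. by rewrite /cmnorm cvariation_cdirac ?mem_set. Qed.

Hypothesis hS : hausdorff_space S.

Lemma charge_int_dirac (a : S) (u : BS -> R) :
  charge_int (charge_of_finite_measure (@dirac _ BS a R)) u = u a.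
Proof.
rewrite /charge_int /=; case: (hahn_choice _) => -[P N] /= h.
have [[mP posP] [mN negN] PN PN0] := h.
have aP : P a.
  apply: contrapT => aP; have aN : N a by move: (I : setT a); rewrite -PN => -[].
  have aN_sub : [set a] `<=` N by move=> x ->.
  have := negN [set a] (set1_Borel hS a) aN_sub.
  by rewrite /charge_of_finite_measure /= diracE mem_set// lee_fin ler10.
have aN : ~ N a by move=> aN; have : (P `&` N) a by []; rewrite PN0.
rewrite /Rintegral (integral_dirac_like (set1_Borel hS a)); last first.
  move=> A mA; apply: eq_trans (jordan_posE h A) _.
  rewrite cjordan_posE /crestr0 mem_set// /crestr /=.
  by rewrite !diracE in_setI (mem_set aP) andbT.
rewrite integral_null_measure ?subr0// => A mA.
apply: eq_trans (jordan_negE h A) _.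
rewrite cjordan_negE /crestr0 mem_set// /crestr /=.
by rewrite indicE memNset ?oppr0// => -[].
Qed.

Lemma cm_int_cdirac (a : S) (g : S -> R[i]) : cm_int (cdirac a) g = g a.
Proof.
rewrite /cm_int /= !charge_int_dirac !charge_int_czero subr0 addr0.
by case: (g a).
Qed.

Lemma cdirac_regular (a : S) : cm_regular (cdirac a).
Proof.
have meas_le (E U : set BS) : E `<=` U -> (((a \in E)%:R)%:E <= ((a \in U)%:R)%:E :> \bar R)%E.
  move=> EU; have [aE|aE] := pselect (E a); first by rewrite !mem_set//; exact: EU.
  by rewrite (memNset aE) lee_fin ler0n.
move=> E mE; rewrite cvariation_cdirac//; split; apply/eqP; rewrite eq_le.
- apply/andP; split.
    apply: le_ereal_inf_tmp => _ [U [oU EU] <-].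
    by rewrite cvariation_cdirac ?meas_le//; exact: open_Borel.
  have [aE | aE] := pselect (E a).
    rewrite mem_set//; apply: ereal_inf_lbound; exists setT; first by split; [exact: openT|].
    by rewrite cvariation_cdirac// mem_set.
  rewrite memNset//; apply: ereal_inf_lbound; exists (~` [set a]).
    split; last by move=> x Ex xa; apply: aE; rewrite -xa.
    by apply: closed_openC; exact: closed_set1.
  rewrite cvariation_cdirac; last by apply: measurableC; exact: set1_Borel.
  by rewrite memNset// => /(_ erefl).
- apply/andP; split; last first.
    apply: ge_ereal_sup => _ [K [cK KE] <-].
    by rewrite cvariation_cdirac ?meas_le//; exact: compact_Borel.
  have [aE | aE] := pselect (E a).
    rewrite mem_set//; apply: ereal_sup_ubound; exists [set a].
      by split; [exact: compact_set1| move=> x ->].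
    by rewrite cvariation_cdirac ?mem_set//; exact: set1_Borel.
  rewrite memNset//; apply: ereal_sup_ubound; exists set0; first by split; [exact: compact0|].
  by rewrite cvariation_cdirac ?memNset.
Qed.

End complex_measures.

Lemma MS_norm_one_identity_cdirac (R : realType) (S : ptopologicalType) (mul : S -> S -> S) :
  hausdorff_space S -> has_identity mul -> MS_has_norm_one_identity R mul.
Proof.
move=> hS [e he]; exists (cdirac e); split; first exact: cdirac_regular.
split; first exact: cdirac_norm.
move=> nu _; split => f _.
  congr (cm_int nu _); apply: funext => t.
  by rewrite cm_int_cdirac// (he t).1.
rewrite cm_int_cdirac//; congr (cm_int nu _); apply: funext => s.
by rewrite (he s).2.
Qed.

Lemma locally_compact_bump (S : ptopologicalType) (R : realType) :
  locally_compact [set: S] -> hausdorff_space S ->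
  forall (x : S) (W : set S), open W -> W x ->
  exists phi : S -> R, [/\ continuous phi, (forall y, 0 <= phi y <= 1), phi x = 1,
    (forall y, ~ W y -> phi y = 0) & compactly_supported phi].
Proof.
move=> lc hS x W oW Wx.
have [C nC [cC clC]] := lc x I.
have nCW : nbhs x (C `&` W).
  apply: filterI; last exact: open_nbhs_nbhs.
  by move: nC; rewrite /within /=; apply: filterS => y; exact.
pose O := (C `&` W)°.
have OCW : O `<=` C `&` W by exact: interior_subset.
have : uniform_separator [set x] (~` O).
  apply: (@locally_compact_completely_regular S R lc hS).
    exact: (open_closedC (@open_interior _ _)).
  by move=> /(_ nCW).
move=> /(@uniform_separatorP S R) [psi [cpsi rpsi psix psiO]].
have psi1 y : ~ O y -> psi y = 1 by move=> Oy; apply: psiO; exists y.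
exists (fun y => 1 - psi y); split.
- by move=> y; apply: cvgB; [exact: cvg_cst|exact: cpsi].
- move=> y; have := rpsi (psi y) (imageT _ y).
  rewrite /= in_itv /= => /andP[h0 h1].
  by rewrite subr_ge0 h1 lerBlDr lerDl h0.
- by rewrite (psix (psi x)) ?subr0//; exists x.
- by move=> y Wy; rewrite psi1 ?subrr// => /OCW[].
exists C; split => // y Cy; rewrite psi1 ?subrr//.
by move=> /OCW[].
Qed.

Lemma compact_measure0_of_locally_null (S : ptopologicalType) (R : realType)
    (m : {measure set Borel S -> \bar R}) (K : set S) :
  hausdorff_space S -> compact K ->
  (forall s, exists U : set S, [/\ open U, U s & m U = 0%E]) -> m K = 0%E.
Proof.
move=> hS cK hU.
have := cK; rewrite compact_cover => /(_ _ [set U : set S | open U /\ m U = 0%E] id).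
case=> [U []//|s Ks|D' D'D KD'].
  by have [U [oU Us mU]] := hU s; exists U.
apply/eqP; rewrite eq_le measure_ge0 andbT.
have mD U : U \in D' -> measurable (id U : set (Borel S)).
  by move=> DU; have /set_mem[oU _] := D'D _ DU; exact: open_Borel.
apply: le_trans (content_sub_fsum m (finite_fset D') mD (compact_Borel hS cK) KD') _.
by rewrite fsbig1 // => U DU; have /set_mem[_ mU] := D'D _ DU; exact: mU.
Qed.

Section norm_one_identity.
Context {S : ptopologicalType} {R : realType} (mul : S -> S -> S).
Local Notation BS := (Borel S).
Hypotheses (hS : hausdorff_space S) (lc : locally_compact [set: S]).
Hypotheses (cl : forall a, continuous (mul a)) (cr : forall a, continuous (mul^~ a)).
Variable mu : cmeasure S R.
Hypotheses (mreg : cm_regular mu) (mnorm : cmnorm mu = 1%E).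
Hypothesis mid : forall nu, cm_regular nu ->
  is_convolution mul mu nu nu /\ is_convolution mul nu mu nu.

Let nu := cm_re mu.
Let hahn := proj2_sig (hahn_choice nu).
Let P := (sval (hahn_choice nu)).1.
Let N := (sval (hahn_choice nu)).2.
Local Notation lam := (jordan_pos hahn).
Local Notation lamN := (jordan_neg hahn).

Let charge_intE (g : BS -> R) :
  charge_int nu g = fine (\int[lam]_x (g x)%:E) - fine (\int[lamN]_x (g x)%:E).
Proof. by []. Qed.

Let lamE (A : set BS) : measurable A -> lam A = nu (A `&` P).
Proof.
move=> mA; apply: eq_trans (jordan_posE hahn A) _.
by rewrite cjordan_posE /crestr0 mem_set.
Qed.

Let mP : measurable P. Proof. by have [[]] := hahn. Qed.
Let mN : measurable N. Proof. by have [_ []] := hahn. Qed.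
Let PNT : P `|` N = setT. Proof. by have [] := hahn. Qed.
Let PN0 : P `&` N = set0. Proof. by have [] := hahn. Qed.

Let nu_fin (A : set BS) : measurable A -> nu A = (fine (nu A))%:E.
Proof. by move=> mA; rewrite fineK// fin_num_measure. Qed.

Lemma jordan_pos_setT_le1 : (lam setT <= 1)%E.
Proof.
rewrite (lamE measurableT) setTI.
have := sum_cabs_le_cvariation mu (is_partition_add_block (is_partition1 mP) mN PN0).
rewrite PNT -/(cmnorm mu) mnorm sum_cabs_add_block big_ord1 EFinD => le1.
apply: le_trans (cm_re_le_cabs mu mP) (le_trans _ le1).
by apply: leeDl; rewrite lee_fin cabs_ge0.
Qed.

(* The real parts of [mu * delta_x = delta_x] and [delta_x * mu = delta_x] tested against [phi]. *)
Lemma charge_int_mulr (x : S) (phi : S -> R) : continuous phi ->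
  compactly_supported phi -> charge_int nu (fun s => phi (mul s x)) = phi x.
Proof.
move=> cphi sphi; have [+ _] := mid (cdirac_regular hS x).
move=> /(_ _ (C0_compactly_supported cphi sphi)); rewrite !(cm_int_cdirac hS) => E.
by have := congr1 (@complex.Re R) E; rewrite Re_cm_int /= => ->.
Qed.

Lemma charge_int_mull (x : S) (phi : S -> R) : continuous phi ->
  compactly_supported phi -> charge_int nu (fun t => phi (mul x t)) = phi x.
Proof.
move=> cphi sphi; have [_ +] := mid (cdirac_regular hS x).
move=> /(_ _ (C0_compactly_supported cphi sphi)); rewrite !(cm_int_cdirac hS).
under [in X in _ = X -> _]eq_fun do rewrite (cm_int_cdirac hS).
by move=> E; have := congr1 (@complex.Re R) E; rewrite Re_cm_int /= => ->.
Qed.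

Lemma jordan_pos_setT_ge1 : (1 <= lam setT)%E.
Proof.
have [phi [cphi phi01 phi1 _ sphi]] := @locally_compact_bump S R lc hS point setT openT I.
pose g s := phi (mul s point).
have mg : measurable_fun setT (g : BS -> R).
  by apply: continuous_Borel_measurable => t; apply: continuous_comp; [exact: cr|exact: cphi].
apply: le_trans (integral_le_measureT lam mg (fun y => phi01 _)).
apply: (ge1_of_integral_difference (m2 := lamN)) => [y|]; first by case/andP: (phi01 (mul y point)).
by rewrite -charge_intE charge_int_mulr.
Qed.

(* A bump at [x] supported away from [k s], pulled back by [k], vanishes near [s]
   but has [lam]-integral at least [1 >= lam S]. *)
Lemma jordan_pos_nbhs0 (x : S) (k : S -> S) (s : S) : continuous k -> k s != x ->
  (forall phi : S -> R, continuous phi -> compactly_supported phi ->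
     charge_int nu (fun t => phi (k t)) = phi x) ->
  exists U : set S, [/\ open U, U s & lam U = 0%E].
Proof.
move=> ck ksx phik.
move: hS; rewrite open_hausdorff => /(_ _ _ ksx) [[A B] /= [/set_mem ksA /set_mem xB]].
move=> [oA oB /eqP AB0].
have [phi [cphi phi01 phi1 phiB sphi]] := locally_compact_bump R lc hS oB xB.
have oU : open (k @^-1` A) by move/continuousP : ck; apply.
exists (k @^-1` A); split => //.
have mg : measurable_fun setT ((fun t => phi (k t)) : BS -> R).
  by apply: continuous_Borel_measurable => t; apply: continuous_comp; [exact: ck|exact: cphi].
apply: (measure_eq0_of_integral_ge1 mg (fun y => phi01 _) (open_Borel oU)).
- move=> t Ut; apply: phiB => Bt.
  by have : (A `&` B) (k t) by []; rewrite AB0.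
- exact: jordan_pos_setT_le1.
- apply: (ge1_of_integral_difference (m2 := lamN)) => [y|]; first by case/andP: (phi01 (k y)).
  by rewrite -charge_intE phik.
Qed.

(* Inner regularity of [|mu|] at the positive Hahn set [P], where [|mu| P >= nu P = 1]. *)
Lemma exists_compact_jordan_pos_gt0 : exists K, compact K /\ (0 < lam K)%E.
Proof.
have P1 : (1 <= nu P)%E by have := jordan_pos_setT_ge1; rewrite (lamE measurableT) setTI.
have cP : ((1/2)%:E < cvariation mu P)%E.
  apply: (@lt_le_trans _ _ 1%E); first by rewrite lte_fin; lra.
  apply: le_trans P1 (le_trans (cm_re_le_cabs mu mP) _).
  by have := sum_cabs_le_cvariation mu (is_partition1 mP); rewrite big_ord1.
rewrite (mreg mP).2 in cP.
have [_ [K [cK KP] <-] hK] := ereal_sup_gt cP.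
have [_ [n [F [mF dF UF ->]]] hF] := ereal_sup_gt hK.
have mK : measurable (K : set BS) by exact: compact_Borel.
have mPK : measurable (P `\` K) by exact: measurableD.
have KPK : K `&` (P `\` K) = set0 by apply/seteqP; split => x // [Kx [_ nKx]].
have partP := is_partition_add_block (And3 mF dF UF) mPK KPK.
rewrite (setDUK KP) in partP.
have := sum_cabs_le_cvariation mu (is_partition_add_block partP mN PN0).
rewrite PNT -/(cmnorm mu) mnorm !sum_cabs_add_block lee_fin => le1.
move: hF; rewrite lte_fin => hF.
have cPK : cabs (cmval mu (P `\` K)) < 1/2 by have := cabs_ge0 (cmval mu N); lra.
have := cm_re_le_cabs mu mPK; rewrite (nu_fin mPK) lee_fin => nuPK.
move: P1; rewrite -(setDUK KP) chargeU// ?setDUK//.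
rewrite (nu_fin mK) (nu_fin mPK) -EFinD lee_fin => P1.
exists K; split => //; rewrite (lamE mK) (setIidl KP) (nu_fin mK) lte_fin; lra.
Qed.

Lemma has_identity_of_norm_one_identity : has_identity mul.
Proof.
apply: contrapT => nid.
have [K [cK lamK]] := exists_compact_jordan_pos_gt0.
suff : lam K = 0%E by move=> lamK0; move: lamK; rewrite lamK0 ltxx.
apply: compact_measure0_of_locally_null hS cK _ => s.
have /existsNP[x /not_andP[sx|xs]] : ~ (forall x, mul s x = x /\ mul x s = x).
  by move=> se; apply: nid; exists s.
- by apply: (jordan_pos_nbhs0 (x := x) (@cr x)); [exact/eqP|exact: charge_int_mulr].
- by apply: (jordan_pos_nbhs0 (x := x) (@cl x)); [exact/eqP|exact: charge_int_mull].
Qed.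

End norm_one_identity.

Unset Implicit Arguments.

Theorem proposition2p1 (R : realType) (S : ptopologicalType) (mul : S -> S -> S) :
  semitopological_semigroup mul ->
  locally_compact [set: S] ->
  has_identity mul <-> MS_has_norm_one_identity R mul.
Proof.
move=> [hS _ cl cr] lc; split; first exact: MS_norm_one_identity_cdirac.
move=> [mu [mreg [mnorm mid]]].
exact: (has_identity_of_norm_one_identity hS lc cl cr mreg mnorm mid).
Qed.
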